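(* Let $U,V$ be Banach spaces, $L=L(V,U)$ the space of bounded linear maps with operator norm, $T>0$, $\alpha,\gamma\in(0,1]$ with $\alpha+\gamma>1$, and $\delta>0$. Let $F:[0,T]\times C^{\alpha}([0,T],U)\to L$ be $\delta$-non-anticipating and such that for each $Z\in C^{\alpha}([0,T],U)$ the map $t\mapsto F(t,Z)$ is $\gamma$-Hölder continuous. Let $X\in C^{\alpha}([0,T],V)$. Then for each $y_0\in U$ there is a unique $Y\in C^{\alpha}([0,T],U)$ such that $$Y_t=y_0+\int_0^tF(u,Y)\,dX_u,\qquad t\in[0,T],$$ where the integral is a Young integral.
   Context: $C^{\alpha}([0,T],U)$ denotes the $\alpha$-Hölder continuous paths. For $Y\in C([0,T],U)$ and $r\in[0,T]$, $\mathcal{Y}_r\in C([0,T],U)$ is defined by $\mathcal{Y}_r(x):=Y_{r\wedge x}$. $F$ is $\delta$-non-anticipating if $F(t,Y)=F(t,\mathcal{Y}_{(t-\delta)_+})$ for all $Y$ and all $t\in[0,T]$, where $(a)_+=\max(a,0)$. Young integral: if $W\in C^{\gamma}([a,b],L)$ and $X\in C^{\alpha}([a,b],V)$ with $\alpha+\gamma>1$, $\int_a^bW_u\,dX_u$ is the limit of Riemann sums $\sum_iW_{s_i}(X_{s_{i+1}}-X_{s_i})$ over partitions of $[a,b]$ as the mesh tends to $0$. *)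

From HB Require Import structures.
From mathcomp Require Import all_boot all_order all_algebra.
From mathcomp Require Import all_classical all_reals all_analysis.
Set Implicit Arguments. Unset Strict Implicit. Unset Printing Implicit Defensive.
Import Order.TTheory GRing.Theory Num.Theory.
Import numFieldNormedType.Exports.
Local Open Scope ring_scope.

(* Paths are functions R -> U; only their values on [0,T] matter. *)

Definition holder_on {R : realType} {U : normedModType R}
  (T alpha : R) (f : R -> U) : Prop :=
  exists C : R, forall s t : R, 0 <= s <= T -> 0 <= t <= T ->
    `|f t - f s| <= C * (`|t - s| `^ alpha).

Definition stopped {R : realType} {U : Type} (Y : R -> U) (r : R) : R -> U :=
  fun x => Y (Num.min r x).

Definition non_anticipating {R : realType} {U V : normedModType R}
  (T alpha delta : R) (F : R -> (R -> U) -> {linear V -> U}) : Prop :=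
  forall (t : R) (Y : R -> U), 0 <= t <= T -> holder_on T alpha Y ->
    F t Y = F t (stopped Y (Num.max (t - delta) 0)).

Definition is_partition {R : realType} (a b : R) (n : nat) (s : nat -> R) : Prop :=
  s 0%N = a /\ s n = b /\ forall i : nat, (i < n)%N -> s i < s i.+1.

Definition mesh_lt {R : realType} (n : nat) (s : nat -> R) (eta : R) : Prop :=
  forall i : nat, (i < n)%N -> s i.+1 - s i < eta.

Definition riemann_sum {R : realType} {U V : normedModType R}
  (W : R -> {linear V -> U}) (X : R -> V) (n : nat) (s : nat -> R) : U :=
  \sum_(i < n) W (s i) (X (s i.+1) - X (s i)).

Definition is_young_integral {R : realType} {U V : normedModType R}
  (W : R -> {linear V -> U}) (X : R -> V) (a b : R) (I : U) : Prop :=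
  forall eps : R, 0 < eps -> exists2 eta : R, 0 < eta &
    forall (n : nat) (s : nat -> R), is_partition a b n s -> mesh_lt n s eta ->
      `|riemann_sum W X n s - I| < eps.

Definition solves_young_ode {R : realType} {U V : normedModType R}
  (T : R) (F : R -> (R -> U) -> {linear V -> U}) (X : R -> V) (y0 : U)
  (Y : R -> U) : Prop :=
  forall t : R, 0 <= t <= T ->
    is_young_integral (fun u => F u Y) X 0 t (Y t - y0).

(* Young integrals come from the sewing lemma: for the germ Xi(s,t) = W_s (X_t - X_s) the
   defect Xi(s,t) - Xi(s,u) - Xi(u,t) = (W_s - W_u) (X_t - X_u) is O(|t - s| ^ (alpha + gamma))
   with alpha + gamma > 1. Bisecting at the midpoint bounds the sum of Xi along any subdivision of
   [a, b] by Xi(a,b) + O((b - a) ^ (alpha + gamma)); comparing two subdivisions through their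
   common refinement then shows that Riemann sums converge at rate mesh ^ (alpha + gamma - 1).
   The Picard map Z |-> y0 + int_0^. F(u,Z) dX_u therefore preserves C^alpha, and by
   delta-non-anticipation its values on [0, r + delta] only depend on Z on [0, r]. Iterating it
   N times with N delta >= T from the constant path y0 gives a fixed point, and two fixed points
   agree on every [0, k delta] by induction on k. *)

From HB Require Import structures.
From mathcomp Require Import all_boot all_order all_algebra.
From mathcomp Require Import all_classical all_reals all_analysis.
From mathcomp Require Import ring lra.
Import Order.TTheory GRing.Theory Num.Theory.
Import numFieldNormedType.Exports.
Local Open Scope ring_scope.

Section LtPath.
Context {disp : Order.disp_t} {T : orderType disp}.
Implicit Types (x m : T) (p : seq T).

Lemma lt_path_le_last {x p} : path <%O x p -> forall z, z \in x :: p -> (z <= last x p)%O.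
Proof.
elim: p x => [|y p IH] x /=; first by move=> _ z; rewrite inE => /eqP ->.
move=> /andP[xy yp] z; rewrite inE => /orP[/eqP ->|]; last exact: IH.
exact: le_trans (ltW xy) (IH _ yp y (mem_head _ _)).
Qed.

Lemma lt_path_last {x p} : path <%O x p -> p != [::] -> (x < last x p)%O.
Proof.
case: p => [//|y p] /andP[xy yp] _.
exact: lt_le_trans xy (lt_path_le_last yp _ (mem_head _ _)).
Qed.

Lemma lt_path_last_nil {x p} : path <%O x p -> last x p = x -> p = [::].
Proof.
case: p => // y p xp lp; have := lt_path_last xp isT.
by rewrite lp ltxx.
Qed.

Lemma lt_path_split {x m p} : path <%O x p -> (x <= m)%O -> (m < last x p)%O ->
  exists p1 z p2, [/\ p = p1 ++ z :: p2, (last x p1 <= m)%O & (m < z)%O].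
Proof.
elim: p x => [|y p IH] x /=; first by move=> _ /le_lt_trans h /h; rewrite ltxx.
move=> /andP[_ yp] xm mb; have [my|ym] := ltP m y; first by exists [::], y, p.
by have [p1 [z [p2 [-> ? ?]]]] := IH y yp ym mb; exists (y :: p1), z, p2.
Qed.

End LtPath.

Lemma path_iota {T : Type} (e : rel T) (s : nat -> T) i0 k :
  (forall i, (i0 <= i)%N -> (i < i0 + k)%N -> e (s i) (s i.+1)) ->
  path e (s i0) (map s (iota i0.+1 k)).
Proof.
elim: k i0 => [//|k IH] i0 H /=; apply/andP; split.
  by apply: H; rewrite ?leqnn // addnS ltnS leq_addr.
by apply: IH => i h1 h2; apply: H; rewrite ?(ltnW h1) // -addSnnS.
Qed.

Lemma last_iota {T : Type} (s : nat -> T) i0 k :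
  last (s i0) (map s (iota i0.+1 k)) = s (i0 + k)%N.
Proof. by elim: k i0 => [|k IH] i0 /=; rewrite ?addn0 // IH addSnnS. Qed.

Section GermSum.
Context {R : realType} {U : normedModType R}.
Implicit Types (Xi : R -> R -> U) (a b x eta : R) (p : seq R).

Fixpoint germ_sum Xi x p : U :=
  if p is y :: p' then Xi x y + germ_sum Xi y p' else 0.

Lemma germ_sum_cat Xi x p q :
  germ_sum Xi x (p ++ q) = germ_sum Xi x p + germ_sum Xi (last x p) q.
Proof. by elim: p x => [|y p IH] x /=; rewrite ?add0r // IH addrA. Qed.

(* [p] lists the points of the subdivision after [a]; consecutive points are at most [eta] apart. *)
Definition subdivision a b eta p :=
  [/\ path <%R a p, last a p = b & path (fun u v => v - u <= eta) a p].

Lemma subdivision_cat {a b c eta p q} :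
  subdivision a b eta p -> subdivision b c eta q -> subdivision a c eta (p ++ q).
Proof.
move=> [p1 p2 p3] [q1 q2 q3].
by split; rewrite ?cat_path ?last_cat p2 ?p1 ?q1 ?p3 ?q3.
Qed.

Lemma germ_sum_iota Xi (s : nat -> R) i0 k :
  germ_sum Xi (s i0) (map s (iota i0.+1 k)) = \sum_(i < k) Xi (s (i0 + i)%N) (s (i0 + i).+1).
Proof.
elim: k i0 => [|k IH] i0 /=; first by rewrite big_ord0.
rewrite big_ord_recl /= addn0 IH; congr (_ + _).
by apply: eq_bigr => i _; rewrite /bump /= add1n addSnnS.
Qed.

Lemma partition_subdivision {a b n} {s : nat -> R} {eta} :
  is_partition a b n s -> (forall i, (i < n)%N -> s i.+1 - s i <= eta) ->
  subdivision a b eta (map s (iota 1 n)).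
Proof.
move=> [<- [sn s_incr]] s_mesh; split.
- by apply: path_iota => i _; rewrite add0n; exact: s_incr.
- by rewrite last_iota add0n.
- by apply: path_iota => i _; rewrite add0n; exact: s_mesh.
Qed.

(* [N.+1] equal steps, so that every [N : nat] gives a genuine partition. *)
Definition uniform_partition a b (N : nat) : nat -> R :=
  fun i => a + i%:R * ((b - a) / N.+1%:R).

Lemma uniform_partition_step a b N i :
  uniform_partition a b N i.+1 - uniform_partition a b N i = (b - a) / N.+1%:R.
Proof. by rewrite /uniform_partition -natr1; ring. Qed.

Lemma uniform_partitionP {a b} N : a < b -> is_partition a b N.+1 (uniform_partition a b N).
Proof.
move=> ab; split; [|split].
- by rewrite /uniform_partition mul0r addr0.
- by rewrite /uniform_partition [X in a + X]mulrC divfK ?pnatr_eq0 // addrC subrK.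
- by move=> i _; rewrite -subr_gt0 uniform_partition_step divr_gt0 ?subr_gt0.
Qed.

Lemma uniform_partition_in a b N i : a <= b -> (i <= N.+1)%N ->
  a <= uniform_partition a b N i <= b.
Proof.
move=> ab iN; rewrite /uniform_partition lerDl mulr_ge0 ?divr_ge0 ?subr_ge0 //=.
rewrite -lerBrDl; apply: (le_trans (y := N.+1%:R * ((b - a) / N.+1%:R))).
  by rewrite ler_wpM2r ?divr_ge0 ?subr_ge0 // ler_nat.
by rewrite mulrC divfK ?pnatr_eq0.
Qed.

Lemma uniform_step_lt a b {eta} : 0 < eta ->
  exists N0, forall N, (N0 <= N)%N -> (b - a) / N.+1%:R < eta.
Proof.
move=> eta0; exists (Num.bound (`|b - a| / eta)) => N hN.
rewrite ltr_pdivrMr // -ltr_pdivrMl // mulrC.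
apply: (le_lt_trans (y := `|b - a| / eta)).
  by apply: ler_wpM2r; [rewrite invr_ge0 ltW | exact: ler_norm].
apply: lt_le_trans (archi_boundP _) _; first by rewrite divr_ge0 // ltW.
by rewrite ler_nat (leq_trans hN).
Qed.

Lemma exists_subdivision {a b eta} : a <= b -> 0 < eta -> exists p, subdivision a b eta p.
Proof.
move=> ab eta0; have [<-|nab] := eqVneq a b; first by exists [::].
have [N0 HN0] := uniform_step_lt a b eta0.
exists (map (uniform_partition a b N0) (iota 1 N0.+1)).
apply: partition_subdivision; first by apply: uniform_partitionP; rewrite lt_neqAle nab.
by move=> i _; rewrite uniform_partition_step ltW // HN0.
Qed.

End GermSum.

Section PowR.
Context {R : realType}.
Implicit Types (a b c d e x y r z K th eta : R).

Lemma ler_powR2r {r x y} : 0 <= r -> 0 <= x -> x <= y -> x `^ r <= y `^ r.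
Proof. by move=> r0 x0 xy; apply: ge0_ler_powR; rewrite ?nnegrE // (le_trans x0). Qed.

Lemma powR_le_mesh th d eta : 1 < th -> 0 <= d -> d <= eta ->
  d `^ th <= eta `^ (th - 1) * d.
Proof.
move=> th1 d0 de; rewrite -(mulr_powRB1 d0) ?(lt_trans ltr01 th1) // mulrC ler_wpM2r //.
by apply: ler_powR2r; rewrite // subr_ge0 ltW.
Qed.

(* The solution of [A = 2 c + 2 ^ (1 - th) A], the recursion produced by bisection in
   [germ_sum_sewing]. *)
Definition sewing_const (c th : R) : R := 2 * c / (1 - 2 * 2^-1 `^ th).

Lemma sewing_ratio_lt1 th : 1 < th -> 2 * 2^-1 `^ th < 1.
Proof.
move=> th1; have h0 : (0 : R) <= 2^-1 by rewrite invr_ge0.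
rewrite -(mulr_powRB1 h0) ?(lt_trans ltr01 th1) // mulrA mulfV // mul1r.
have := @gt0_ltr_powR R (th - 1) _ 2^-1 1; rewrite powR1; apply.
- by rewrite subr_gt0.
- by rewrite nnegrE.
- by rewrite nnegrE.
- by rewrite invf_lt1 // ltr1n.
Qed.

Lemma sewing_const_ge0 c th : 0 <= c -> 1 < th -> 0 <= sewing_const c th.
Proof.
by move=> c0 th1; rewrite divr_ge0 ?mulr_ge0 // subr_ge0 ltW // sewing_ratio_lt1.
Qed.

Lemma sewing_constE c th : 1 < th ->
  sewing_const c th = 2 * c + 2 * 2^-1 `^ th * sewing_const c th.
Proof.
move=> th1; have ne0 : 1 - 2 * 2^-1 `^ th != 0.
  by rewrite subr_eq0 eq_sym lt_eqF // sewing_ratio_lt1.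
have : sewing_const c th * (1 - 2 * 2^-1 `^ th) = 2 * c by rewrite divfK.
by move=> <-; ring.
Qed.

Lemma powR_small_near0 {K z e} : 0 <= K -> 0 < z -> 0 < e ->
  exists2 eta, 0 < eta & forall x, 0 <= x -> x <= eta -> K * x `^ z <= e.
Proof.
move=> K0 z0 e0; have K1 : 0 < K + 1 by exact: ltr_wpDl K0 ltr01.
exists ((e / (K + 1)) `^ z^-1) => [|x x0 xe]; first by rewrite powR_gt0 ?divr_gt0.
have : x `^ z <= e / (K + 1).
  rewrite (le_trans (ler_powR2r (ltW z0) x0 xe)) // -powRrM mulVf ?gt_eqF //.
  by rewrite powRr1 // ltW ?divr_gt0.
move/(ler_wpM2l K0)/le_trans; apply.
by rewrite mulrA ler_pdivrMr // mulrC ler_wpM2l ?ltW //; lra.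
Qed.

Lemma uniform_step_small {K z e a b} : 0 <= K -> 0 < z -> 0 < e -> a <= b ->
  exists N0, forall N, (N0 <= N)%N -> K * ((b - a) / N.+1%:R) `^ z <= e.
Proof.
move=> K0 z0 e0 ab; have [eta eta0 Heta] := powR_small_near0 K0 z0 e0.
have [N0 HN0] := uniform_step_lt a b eta0.
by exists N0 => N /HN0/ltW; apply: Heta; rewrite divr_ge0 // subr_ge0.
Qed.

End PowR.

Lemma sewing_split_identity {V : zmodType} (S1 Q S2 B A1 A2 C : V) :
  S1 + (Q + S2) - B = - (B - A1 - A2) - (A2 - Q - C) + (S1 - A1) + (S2 - C).
Proof.
rewrite !opprD !opprK !addrA addrK.
rewrite 3!(addrAC _ _ (- A1)) addrK 2!(addrAC _ _ (- C)) addrK.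
by rewrite (addrC (-B) Q) (addrAC Q (-B) S1) (addrAC (Q + S1) (-B) S2) (addrC Q S1).
Qed.

Lemma ler_normD4 {K : numDomainType} {V : normedZmodType K} (a b c d : V) :
  `|a + b + c + d| <= `|a| + `|b| + `|c| + `|d|.
Proof.
by rewrite (le_trans (ler_normD _ _)) // lerD2r (le_trans (ler_normD _ _)) // lerD2r ler_normD.
Qed.

Section Sewing.
Context {R : realType} {U : normedModType R} {Xi : R -> R -> U} {T c th : R}.
Hypotheses (c_ge0 : 0 <= c) (th_gt1 : 1 < th).
Hypothesis germ_defect : forall s u t, 0 <= s -> s <= u -> u <= t -> t <= T ->
  `|Xi s t - Xi s u - Xi u t| <= c * (t - s) `^ th.
Arguments germ_defect {s u t}.

Let A := sewing_const c th.
Let A_ge0 : 0 <= A. Proof. exact: sewing_const_ge0. Qed.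
Let th_gt0 : 0 < th. Proof. exact: lt_trans ltr01 th_gt1. Qed.

Lemma germ_diag0 x : 0 <= x -> x <= T -> Xi x x = 0.
Proof.
move=> x0 xT; apply/eqP; rewrite -normr_le0.
have := germ_defect x0 (lexx x) (lexx x) xT.
by rewrite !subrr powR0 ?gt_eqF // mulr0 sub0r normrN.
Qed.

Lemma germ_sum_sewing {x p} : path <%R x p -> 0 <= x -> last x p <= T ->
  `|germ_sum Xi x p - Xi x (last x p)| <= A * (last x p - x) `^ th.
Proof.
have [n] := ubnP (size p); elim: n x p => // n IH x p szp xp x0 bT.
have [p0|pn0] := eqVneq p [::].
  by rewrite p0 /= in bT *; rewrite germ_diag0 // !subrr normr0 powR0 ?gt_eqF // mulr0.
have xb : x < last x p by exact: lt_path_last.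
have xm : x <= (x + last x p) / 2 by lra.
have mb : (x + last x p) / 2 < last x p by lra.
have [p1 [z [p2 [Ep xjm mz]]]] := lt_path_split xp xm mb.
rewrite Ep last_cat /= in bT xjm mz *; rewrite germ_sum_cat /=.
move: xp szp; rewrite Ep cat_path size_cat /= addnS ltnS => /and3P[xp1 xjz zp2] szp.
set xj := last x p1 in xjz xjm mz *; set b := last z p2 in bT xjm mz *.
have xxj : x <= xj by exact: lt_path_le_last xp1 _ (mem_head _ _).
have zb : z <= b by exact: lt_path_le_last zp2 _ (mem_head _ _).
have xj0 : 0 <= xj by exact: le_trans x0 xxj.
have xjT : xj <= T by lra.
have d1 := IH x p1 (leq_ltn_trans (leq_addr _ _) szp) xp1 x0 xjT.
have d2 := IH z p2 (leq_ltn_trans (leq_addl _ _) szp) zp2 (le_trans xj0 (ltW xjz)) bT.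
rewrite -/xj in d1; rewrite -/b in d2.
have e1 := germ_defect x0 xxj (le_trans (ltW xjz) zb) bT.
have e2 := germ_defect xj0 (ltW xjz) zb bT.
rewrite (sewing_split_identity _ _ _ _ (Xi x xj) (Xi xj b) (Xi z b)).
apply: le_trans (ler_normD4 _ _ _ _) _; rewrite !normrN.
(* both halves have length at most [L / 2], and [sewing_constE] absorbs the two defects *)
pose L := b - x; pose h := 2^-1 `^ th * L `^ th.
have L0 : 0 <= L by rewrite /L; lra.
have half1 : (xj - x) `^ th <= h.
  by rewrite /h -powRM ?invr_ge0 //; apply: ler_powR2r (ltW th_gt0) _ _; rewrite /L; lra.
have half2 : (b - z) `^ th <= h.
  by rewrite /h -powRM ?invr_ge0 //; apply: ler_powR2r (ltW th_gt0) _ _; rewrite /L; lra.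
have whole : (b - xj) `^ th <= L `^ th.
  by apply: ler_powR2r (ltW th_gt0) _ _; rewrite /L; lra.
have hA : A * L `^ th = 2 * (c * L `^ th) + 2 * (A * h).
  by rewrite /h /A {1}sewing_constE //; ring.
have := ler_wpM2l A_ge0 half1; have := ler_wpM2l A_ge0 half2.
have := ler_wpM2l c_ge0 whole; rewrite hA.
move: e1 e2 d1 d2; rewrite -/L -/A; lra.
Qed.

Lemma germ_sum_refine {eta x p q} : path <%R x p -> path <%R x q ->
  last x q = last x p -> {subset p <= q} -> 0 <= x -> last x p <= T ->
  path (fun u v => v - u <= eta) x p ->
  `|germ_sum Xi x q - germ_sum Xi x p| <= A * eta `^ (th - 1) * (last x p - x).
Proof.
elim: p x q => [|y p IH] x q.
  move=> _ xq /= /(lt_path_last_nil xq) -> _ _ _ _.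
  by rewrite /= !subrr normr0 mulr0.
move=> /= /andP[xy yp] xq lE sub x0 bT /andP[mxy mp].
have yq : y \in q by apply: sub; exact: mem_head.
move: xq lE sub; case/splitPr: yq => q1 q2.
rewrite -cat_rcons cat_path last_cat last_rcons => /andP[xq1 yq2] lE sub.
have sub' : {subset p <= q2}.
  move=> z zp; have := sub z; rewrite inE zp orbT mem_cat => /(_ isT) /orP[zq1|//].
  have := lt_path_le_last xq1 z; rewrite last_rcons inE zq1 orbT => /(_ isT).
  by rewrite leNgt (allP (lt_path_min yp) z zp).
have yT : y <= T by exact: le_trans (lt_path_le_last yp _ (mem_head _ _)) bT.
have y0 : 0 <= y by exact: le_trans x0 (ltW xy).
have d1 := germ_sum_sewing xq1 x0; rewrite last_rcons in d1; have {}d1 := d1 yT.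
have d2 := IH y q2 yp yq2 lE sub' y0 bT mp.
rewrite germ_sum_cat last_rcons /= opprD addrACA; apply: le_trans (ler_normD _ _) _.
have e1 : A * (y - x) `^ th <= A * eta `^ (th - 1) * (y - x).
  by rewrite -mulrA ler_wpM2l // powR_le_mesh // subr_ge0 ltW.
rewrite [X in _ <= X](_ : _ = A * eta `^ (th - 1) * (y - x) +
  A * eta `^ (th - 1) * (last y p - y)); last by ring.
by apply: lerD => //; exact: le_trans d1 e1.
Qed.

Lemma germ_sum_compare {a b eta1 eta2 p q} : 0 <= a -> a < b -> b <= T ->
  subdivision a b eta1 p -> subdivision a b eta2 q ->
  `|germ_sum Xi a p - germ_sum Xi a q| <=
    A * eta1 `^ (th - 1) * (b - a) + A * eta2 `^ (th - 1) * (b - a).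
Proof.
move=> a0 ab bT [hp lp mp] [hq lq mq].
pose r := sort <=%O (undup (p ++ q)).
have mem_r z : (z \in r) = (z \in p) || (z \in q) by rewrite mem_sort mem_undup mem_cat.
have hr : path <%R a r.
  rewrite lt_path_sortedE sort_lt_sorted undup_uniq andbT; apply/allP => z.
  by rewrite mem_r => /orP[]; apply/allP; exact: lt_path_min.
have bp : b \in p.
  by have := mem_last a p; rewrite lp inE => /predU1P[ba|//]; rewrite ba ltxx in ab.
have lr : last a r = b.
  apply: le_anti; rewrite (lt_path_le_last hr) ?inE ?mem_r ?bp ?orbT // andbT.
  have := mem_last a r; rewrite inE mem_r => /or3P[/eqP->|zp|zq]; first exact: ltW.
    by rewrite -lp (lt_path_le_last hp) // inE zp orbT.
  by rewrite -lq (lt_path_le_last hq) // inE zq orbT.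
have sub_p : {subset p <= r} by move=> z zp; rewrite mem_r zp.
have sub_q : {subset q <= r} by move=> z zq; rewrite mem_r zq orbT.
have pT : last a p <= T by rewrite lp.
have qT : last a q <= T by rewrite lq.
have d1 := germ_sum_refine hp hr (etrans lr (esym lp)) sub_p a0 pT mp.
have d2 := germ_sum_refine hq hr (etrans lr (esym lq)) sub_q a0 qT mq.
rewrite lp in d1; rewrite lq in d2.
have -> : germ_sum Xi a p - germ_sum Xi a q =
    (germ_sum Xi a r - germ_sum Xi a q) - (germ_sum Xi a r - germ_sum Xi a p).
  by rewrite opprB [RHS]addrC addrA subrK.
by apply: le_trans (ler_normB _ _) _; rewrite addrC lerD.
Qed.

End Sewing.

Section SewingLimit.
Context {R : realType} {U : normedModType R}.
Implicit Types (Xi : R -> R -> U) (th a b c : R) (I : U).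

Definition sewing_limit Xi th a b I :=
  exists2 K, 0 <= K & forall eta p, subdivision a b eta p ->
    `|germ_sum Xi a p - I| <= K * eta `^ (th - 1) * (b - a).

Lemma sewing_limit_id {Xi th a I} : sewing_limit Xi th a a I -> I = 0.
Proof.
case=> K _ /(_ 1 [::]); rewrite subrr mulr0 /= sub0r normrN normr_le0.
by move=> /(_ _)/eqP; apply.
Qed.

Lemma sewing_limit_add {Xi th a b c I1 I2 I3} : 1 < th -> a <= b -> b <= c ->
  sewing_limit Xi th a b I1 -> sewing_limit Xi th b c I2 -> sewing_limit Xi th a c I3 ->
  I3 = I1 + I2.
Proof.
move=> th1 ab bc [K1 K10 H1] [K2 K20 H2] [K3 K30 H3].
apply/eqP; rewrite -subr_eq0 -normr_le0; apply/ler_addgt0Pr => e e0; rewrite add0r.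
have ac : a <= c by exact: le_trans ab bc.
have K0 : 0 <= (K1 + K2 + K3) * (c - a) by apply: mulr_ge0; rewrite ?subr_ge0 ?addr_ge0.
have z0 : 0 < th - 1 by rewrite subr_gt0.
have [eta eta0 Heta] := powR_small_near0 K0 z0 e0.
have [p1 sp1] := exists_subdivision ab eta0; have [p2 sp2] := exists_subdivision bc eta0.
have d1 := H1 _ _ sp1; have d2 := H2 _ _ sp2; have d3 := H3 _ _ (subdivision_cat sp1 sp2).
have [_ l1 _] := sp1; rewrite germ_sum_cat l1 in d3.
have small := Heta _ (ltW eta0) (lexx _).
set S1 := germ_sum Xi a p1 in d1 d3 *; set S2 := germ_sum Xi b p2 in d2 d3 *.
have -> : I3 - (I1 + I2) = S1 - I1 + (S2 - I2) - (S1 + S2 - I3).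
  by rewrite addrACA opprB [RHS]addrC subrKA opprD.
apply: le_trans (ler_normB _ _) _; apply: le_trans (lerD (ler_normD _ _) (lexx _)) _.
set x := eta `^ (th - 1) in small d1 d2 d3; have x0 : 0 <= x by exact: powR_ge0.
have f1 : K1 * x * (b - a) <= K1 * x * (c - a) by rewrite ler_wpM2l ?mulr_ge0 ?lerD2r.
have f2 : K2 * x * (c - b) <= K2 * x * (c - a) by rewrite ler_wpM2l ?mulr_ge0 ?lerD2l ?lerN2.
have hK : (K1 + K2 + K3) * (c - a) * x =
  K1 * x * (c - a) + K2 * x * (c - a) + K3 * x * (c - a) by ring.
lra.
Qed.

End SewingLimit.

Local Open Scope classical_set_scope.

(* Only meaningful when the limit exists; see [sewing_integralP]. *)
Definition sewing_integral {R : realType} {U : normedModType R}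
  (Xi : R -> R -> U) (a b : R) : U :=
  lim ((fun N => germ_sum Xi a (map (uniform_partition a b N) (iota 1 N.+1))) @ \oo).

Section SewingIntegral.
Context {R : realType} {U : completeNormedModType R} {Xi : R -> R -> U} {T c th : R}.
Hypotheses (c_ge0 : 0 <= c) (th_gt1 : 1 < th).
Hypothesis germ_defect : forall s u t, 0 <= s -> s <= u -> u <= t -> t <= T ->
  `|Xi s t - Xi s u - Xi u t| <= c * (t - s) `^ th.

Let A := sewing_const c th.

Lemma sewing_integral_id a : 0 <= a -> a <= T -> sewing_integral Xi a a = 0.
Proof.
move=> a0 aT; rewrite /sewing_integral.
have -> : uniform_partition a a = fun _ _ => a.
  by apply/funext => N; apply/funext => i; rewrite /uniform_partition subrr mul0r mulr0 addr0.
have gs0 (l : seq nat) : germ_sum Xi a (map (fun=> a) l) = 0.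
  by elim: l => //= _ l ->; rewrite (germ_diag0 th_gt1 germ_defect) ?addr0.
by under eq_fun do rewrite gs0; exact: lim_cst.
Qed.

Let uniform_sum a b N := germ_sum Xi a (map (uniform_partition a b N) (iota 1 N.+1)).
Let mesh (a b : R) (N : nat) := (b - a) / N.+1%:R.

Let uniform_subdivision {a b} N : a < b ->
  subdivision a b (mesh a b N) (map (uniform_partition a b N) (iota 1 N.+1)).
Proof.
move=> ab; apply: partition_subdivision (uniform_partitionP N ab) _ => i _.
by rewrite uniform_partition_step.
Qed.

Let uniform_sum_tail {a b e} : a < b -> 0 < e ->
  exists N0, forall N, (N0 <= N)%N -> A * mesh a b N `^ (th - 1) * (b - a) <= e.
Proof.
move=> ab e0; have z0 : 0 < th - 1 by rewrite subr_gt0.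
have A0 : 0 <= A * (b - a).
  by apply: mulr_ge0; [exact: sewing_const_ge0 | rewrite subr_ge0 ltW].
have [N0 HN0] := uniform_step_small A0 z0 e0 (ltW ab).
by exists N0 => N /HN0; rewrite mulrAC.
Qed.

Let uniform_sum_cvg {a b} : 0 <= a -> a < b -> b <= T -> cvg (uniform_sum a b @ \oo).
Proof.
move=> a0 ab bT; apply: cauchy_cvg; apply: cauchy_exP => e e0.
have [N0 HN0] := uniform_sum_tail ab (divr_gt0 e0 (ltr0n _ 3)).
exists (uniform_sum a b N0), N0 => // N hN /=; rewrite -ball_normE /=.
have := germ_sum_compare c_ge0 th_gt1 germ_defect a0 ab bT
  (uniform_subdivision N0 ab) (uniform_subdivision N ab).
rewrite -/(uniform_sum a b N0) -/(uniform_sum a b N) -/A.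
have := HN0 N0 (leqnn _); have := HN0 N hN; lra.
Qed.

Lemma sewing_integral_approx {a b eta p} : 0 <= a -> a <= b -> b <= T ->
  subdivision a b eta p ->
  `|germ_sum Xi a p - sewing_integral Xi a b| <= A * eta `^ (th - 1) * (b - a).
Proof.
move=> a0 ab bT sp; case: (eqVneq a b) bT sp => [<- aT [hp lp _]|nab bT sp].
  rewrite (lt_path_last_nil hp lp) sewing_integral_id //.
  by rewrite /= subrr normr0 subrr mulr0.
have {}ab : a < b by rewrite lt_neqAle nab ab.
apply/ler_addgt0Pr => e e0; have e2 : 0 < e / 2 by rewrite divr_gt0.
have [N1 _ HN1] := (cvgrPdist_le _ _).1 (uniform_sum_cvg a0 ab bT) _ e2.
have [N0 HN0] := uniform_sum_tail ab e2; pose N := maxn N0 N1.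
have := HN1 N (leq_maxr N0 N1); have := HN0 N (leq_maxl N0 N1).
have := germ_sum_compare c_ge0 th_gt1 germ_defect a0 ab bT sp (uniform_subdivision N ab).
rewrite -/(uniform_sum a b N) -/A.
have := ler_distD (uniform_sum a b N) (germ_sum Xi a p) (sewing_integral Xi a b).
by rewrite [`|sewing_integral _ _ _ - _|]distrC; lra.
Qed.

Lemma sewing_integralP a b : 0 <= a -> a <= b -> b <= T ->
  sewing_limit Xi th a b (sewing_integral Xi a b).
Proof.
by move=> a0 ab bT; exists A => [|eta p]; [exact: sewing_const_ge0 | exact: sewing_integral_approx].
Qed.

Lemma sewing_integral_sub_germ {a b} : 0 <= a -> a < b -> b <= T ->
  `|sewing_integral Xi a b - Xi a b| <= A * (b - a) `^ th.
Proof.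
move=> a0 ab bT; have sub : subdivision a b (b - a) [:: b] by split; rewrite /= ?ab ?lexx.
have := sewing_integral_approx a0 (ltW ab) bT sub.
rewrite /= addr0 distrC -mulrA [_ `^ _ * _]mulrC mulr_powRB1 // ?subr_ge0 ?ltW //.
exact: lt_trans ltr01 th_gt1.
Qed.

End SewingIntegral.

Section YoungGerm.
Context {R : realType} {U V : normedModType R}.
Implicit Types (W : R -> {linear V -> U}) (X : R -> V) (th a b : R) (I J : U).

Definition young_germ W X : R -> R -> U := fun s t => W s (X t - X s).

Lemma riemann_sum_germ_sum W X n s :
  riemann_sum W X n s = germ_sum (young_germ W X) (s 0%N) (map s (iota 1 n)).
Proof. by rewrite germ_sum_iota. Qed.

Lemma young_germ_defect W X (T alpha gamma Cw Cx : R) :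
  0 < alpha -> 0 < gamma -> 0 <= Cw -> 0 <= Cx ->
  (forall s t, 0 <= s <= T -> 0 <= t <= T -> forall v,
    `|W t v - W s v| <= Cw * `|t - s| `^ gamma * `|v|) ->
  (forall s t, 0 <= s <= T -> 0 <= t <= T -> `|X t - X s| <= Cx * `|t - s| `^ alpha) ->
  forall s u t, 0 <= s -> s <= u -> u <= t -> t <= T ->
    `|young_germ W X s t - young_germ W X s u - young_germ W X u t| <=
      (Cw * Cx) * (t - s) `^ (alpha + gamma).
Proof.
move=> al0 ga0 Cw0 Cx0 hW hX s u t s0 su ut tT.
rewrite /young_germ -linearB /= opprB addrA subrK.
have [sT uT tT'] : [/\ 0 <= s <= T, 0 <= u <= T & 0 <= t <= T].
  by split; apply/andP; split; lra.
have dW : `|s - u| `^ gamma <= (t - s) `^ gamma.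
  by rewrite distrC ger0_norm ?subr_ge0 //; apply: ler_powR2r (ltW ga0) _ _; lra.
have dX : `|t - u| `^ alpha <= (t - s) `^ alpha.
  by rewrite ger0_norm ?subr_ge0 //; apply: ler_powR2r (ltW al0) _ _; lra.
apply: le_trans (hW u s uT sT (X t - X u)) _.
rewrite powRD; last by rewrite gt_eqF //= addr_gt0.
rewrite [X in _ <= X](_ : _ = Cw * (t - s) `^ gamma * (Cx * (t - s) `^ alpha)); last by ring.
apply: ler_pM; rewrite ?mulr_ge0 ?powR_ge0 ?ler_wpM2l //.
exact: le_trans (hX u t uT tT') (ler_wpM2l Cx0 dX).
Qed.

Lemma sewing_limit_young {W X th a b I} : 1 < th -> a <= b ->
  sewing_limit (young_germ W X) th a b I -> is_young_integral W X a b I.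
Proof.
move=> th1 ab [K K0 HK] e e0.
have z0 : 0 < th - 1 by rewrite subr_gt0.
have Kab : 0 <= K * (b - a) by rewrite mulr_ge0 ?subr_ge0.
have [eta eta0 Heta] := powR_small_near0 Kab z0 (divr_gt0 e0 (ltr0n _ 2)).
exists eta => // n s sP s_mesh.
have sub := partition_subdivision sP (fun i lt_in => ltW (s_mesh i lt_in)).
have s0 : s 0%N = a by case: sP.
rewrite riemann_sum_germ_sum s0.
apply: le_lt_trans (HK _ _ sub) _; rewrite mulrAC.
apply: le_lt_trans (Heta _ (ltW eta0) (lexx _)) _.
by rewrite ltr_pdivrMr // ltr_pMr // ltr1n.
Qed.

Lemma young_integral_unique {W1 W2 X th a b J I} : 1 < th -> a <= b ->
  (forall u, a <= u <= b -> W1 u = W2 u) ->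
  is_young_integral W1 X a b J -> sewing_limit (young_germ W2 X) th a b I -> J = I.
Proof.
move=> th1 ab W12 HJ HI; have z0 : 0 < th - 1 by rewrite subr_gt0.
apply/eqP; rewrite -subr_eq0 -normr_le0; apply/ler_addgt0Pr => e e0; rewrite add0r.
have e2 : 0 < e / 2 by rewrite divr_gt0.
have [eta1 eta1_0 H1] := HJ _ e2.
case: (eqVneq a b) H1 HI => [<-|nab] H1 HI.
  rewrite (sewing_limit_id HI) subr0.
  have trivial_partition : is_partition a a 0 (fun=> a) by do 2?split => // i; rewrite ltn0.
  have trivial_mesh : mesh_lt 0 (fun=> a) eta1 by move=> i; rewrite ltn0.
  have := H1 0%N _ trivial_partition trivial_mesh.
  rewrite /riemann_sum big_ord0 sub0r normrN => /ltW /le_trans; apply.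
  by rewrite ler_pdivrMr // ler_pMr // ler1n.
have {}ab : a < b by rewrite lt_neqAle nab ab.
case: HI => K K0 HK.
have Kab : 0 <= K * (b - a) by rewrite mulr_ge0 // subr_ge0 ltW.
have [N0 HN0] := uniform_step_small Kab z0 e2 (ltW ab).
have [N1 HN1] := uniform_step_lt a b eta1_0.
pose N := maxn N0 N1; pose s := uniform_partition a b N.
have sP := uniform_partitionP N ab.
have s_step i : s i.+1 - s i = (b - a) / N.+1%:R by exact: uniform_partition_step.
have s_mesh : mesh_lt N.+1 s eta1 by move=> i _; rewrite s_step HN1 // leq_maxr.
have h1 := H1 _ _ sP s_mesh.
have s_le i : (i < N.+1)%N -> s i.+1 - s i <= (b - a) / N.+1%:R by rewrite s_step.
have sub := partition_subdivision sP s_le.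
have h2 := HK _ _ sub; have h3 := HN0 N (leq_maxl _ _).
have same_sums : riemann_sum W1 X N.+1 s = riemann_sum W2 X N.+1 s.
  by apply: eq_bigr => i _; rewrite W12 // uniform_partition_in ?(ltW ab) // ltnW.
have s0 : s 0%N = a by case: sP.
rewrite -/s same_sums riemann_sum_germ_sum s0 distrC in h1.
have := ler_distD (germ_sum (young_germ W2 X) a (map s (iota 1 N.+1))) J I.
by move: h1 h2 h3; rewrite mulrAC; lra.
Qed.

End YoungGerm.

Section HolderPaths.
Context {R : realType} {U : normedModType R}.
Implicit Types (T alpha m : R) (f : R -> U).

Lemma holder_on_ge0 {T alpha f} : holder_on T alpha f ->
  exists2 C, 0 <= C & forall s t, 0 <= s <= T -> 0 <= t <= T ->
    `|f t - f s| <= C * `|t - s| `^ alpha.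
Proof.
case=> C HC; exists (Num.max C 0) => [|s t hs ht]; first by rewrite le_max lexx orbT.
by rewrite (le_trans (HC s t hs ht)) // ler_wpM2r ?powR_ge0 // le_max lexx.
Qed.

Lemma holder_on_cst T alpha (y : U) : holder_on T alpha (fun=> y).
Proof. by exists 0 => s t _ _; rewrite subrr normr0 mul0r. Qed.

Lemma min_in_range {m T x} : 0 <= m -> 0 <= x <= T -> 0 <= Num.min m x <= T.
Proof. by move=> m0 /andP[x0 xT]; rewrite le_min m0 x0 ge_min xT orbT. Qed.

Lemma min_lipschitz (m s t : R) : `|Num.min m t - Num.min m s| <= `|t - s|.
Proof.
rewrite ler_norml !minEle; have := ler_norm (t - s); have := ler_norm (s - t).
by rewrite distrC; case: (leP m t); case: (leP m s); lra.
Qed.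

Lemma holder_on_stopped {T alpha m f} : 0 < alpha -> 0 <= m ->
  holder_on T alpha f -> holder_on T alpha (stopped f m).
Proof.
move=> al0 m0 /holder_on_ge0[C C0 HC]; exists C => s t hs ht.
rewrite (le_trans (HC _ _ (min_in_range m0 hs) (min_in_range m0 ht))) // ler_wpM2l //.
exact: ler_powR2r (ltW al0) (normr_ge0 _) (min_lipschitz _ _ _).
Qed.

End HolderPaths.

Definition agree_upto {R : realType} {U : Type} (T r : R) (Z Z' : R -> U) :=
  forall x, 0 <= x <= T -> x <= r -> Z x = Z' x.

Section DelayFixedPoint.
Context {R : realType} {U : Type} {T delta : R} {P : (R -> U) -> Prop}
  {Phi : (R -> U) -> R -> U} {y0 : U}.
Hypotheses (delta_gt0 : 0 < delta) (P_cst : P (fun=> y0)) (P_Phi : forall Z, P Z -> P (Phi Z)).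
Hypothesis Phi0 : forall Z, P Z -> Phi Z 0 = y0.
Hypothesis Phi_local : forall Z Z' r, P Z -> P Z' -> 0 <= r -> agree_upto T r Z Z' ->
  agree_upto T (r + delta) (Phi Z) (Phi Z').

Let agree_upto0 (Z Z' : R -> U) : Z 0 = Z' 0 -> agree_upto T 0 Z Z'.
Proof. by move=> Z0 x /andP[x0 _] x_le0; have -> : x = 0 by apply: le_anti; rewrite x_le0. Qed.

Let agree_step Z Z' k : P Z -> P Z' -> agree_upto T (k%:R * delta) Z Z' ->
  agree_upto T (k.+1%:R * delta) (Phi Z) (Phi Z').
Proof.
move=> PZ PZ' agr; rewrite -natr1 mulrDl mul1r.
by apply: Phi_local => //; rewrite mulr_ge0 // ltW.
Qed.

Let cover_0T : exists N : nat, T <= N%:R * delta.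
Proof.
exists (Num.bound (`|T| / delta)); apply: le_trans (ler_norm T) (ltW _).
by rewrite -ltr_pdivrMr // archi_boundP // divr_ge0 // ltW.
Qed.

Lemma delay_fixed_point : exists2 Y, P Y & forall x, 0 <= x <= T -> Phi Y x = Y x.
Proof.
pose Y k := iter k Phi (fun=> y0).
have PY k : P (Y k) by elim: k => [|k /P_Phi].
have stable k : agree_upto T (k%:R * delta) (Y k.+1) (Y k).
  elim: k => [|k IH]; first by rewrite mul0r; apply: agree_upto0; exact: Phi0.
  exact: agree_step (PY k.+1) (PY k) IH.
have [N TN] := cover_0T; exists (Y N) => // x hx.
by apply: (stable N x hx); case/andP: hx => _ /le_trans; apply.
Qed.

Lemma delay_fixed_point_unique Y Y' : P Y -> P Y' ->
  (forall x, 0 <= x <= T -> Phi Y x = Y x) -> (forall x, 0 <= x <= T -> Phi Y' x = Y' x) ->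
  forall x, 0 <= x <= T -> Y x = Y' x.
Proof.
move=> PY PY' fixY fixY'.
have agree k : agree_upto T (k%:R * delta) Y Y'.
  elim: k => [|k IH] x hx; rewrite -fixY // -fixY' //; move: x hx.
    by rewrite mul0r; apply: agree_upto0; rewrite !Phi0.
  exact: agree_step.
have [N TN] := cover_0T => x hx.
by apply: (agree N x hx); case/andP: hx => _ /le_trans; apply.
Qed.

End DelayFixedPoint.

Section YoungODE.
Context {R : realType} {U V : completeNormedModType R} {T alpha gamma delta : R}
  {F : R -> (R -> U) -> {linear V -> U}} {X : R -> V} (y0 : U).
Hypotheses (T_ge0 : 0 <= T) (alpha_gt0 : 0 < alpha) (gamma_gt0 : 0 < gamma)
  (alpha_gamma_gt1 : 1 < alpha + gamma) (delta_gt0 : 0 < delta).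
Hypothesis F_dom : forall t Z Z', 0 <= t <= T ->
  holder_on T alpha Z -> holder_on T alpha Z' ->
  (forall x, 0 <= x <= T -> Z x = Z' x) -> F t Z = F t Z'.
Hypothesis F_bounded : forall t Z, 0 <= t <= T -> holder_on T alpha Z ->
  exists c, forall v, `|F t Z v| <= c * `|v|.
Hypothesis F_holder : forall Z, holder_on T alpha Z ->
  exists C, forall s t, 0 <= s <= T -> 0 <= t <= T ->
    forall v, `|F t Z v - F s Z v| <= C * (`|t - s| `^ gamma) * `|v|.
Hypothesis F_non_anticipating : non_anticipating T alpha delta F.
Hypothesis X_holder : holder_on T alpha X.

Let FX (Z : R -> U) : R -> R -> U := young_germ (fun u => F u Z) X.

Definition picard (Z : R -> U) (t : R) : U := y0 + sewing_integral (FX Z) 0 t.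

Lemma F_germ_defect {Z} : holder_on T alpha Z -> exists2 c, 0 <= c &
  forall s u t, 0 <= s -> s <= u -> u <= t -> t <= T ->
    `|FX Z s t - FX Z s u - FX Z u t| <= c * (t - s) `^ (alpha + gamma).
Proof.
move=> /F_holder[C HC]; have [Cx Cx0 hXC] := holder_on_ge0 X_holder.
exists (Num.max C 0 * Cx); first by rewrite mulr_ge0 // le_max lexx orbT.
apply: young_germ_defect => //; first by rewrite le_max lexx orbT.
move=> s t hs ht v; apply: le_trans (HC s t hs ht v) _.
by rewrite !ler_wpM2r ?powR_ge0 // le_max lexx.
Qed.

Lemma F_sewing_integralP {Z a b} : holder_on T alpha Z -> 0 <= a -> a <= b -> b <= T ->
  sewing_limit (FX Z) (alpha + gamma) a b (sewing_integral (FX Z) a b).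
Proof.
move=> hZ; have [c c0 defect] := F_germ_defect hZ.
exact: (sewing_integralP c0 alpha_gamma_gt1 defect a b).
Qed.

Lemma picard0 Z : holder_on T alpha Z -> picard Z 0 = y0.
Proof.
move=> hZ; have := F_sewing_integralP hZ (lexx 0) (lexx 0) T_ge0.
by rewrite /picard => /sewing_limit_id ->; rewrite addr0.
Qed.

Lemma picard_young {Z t} : holder_on T alpha Z -> 0 <= t <= T ->
  is_young_integral (fun u => F u Z) X 0 t (picard Z t - y0).
Proof.
move=> hZ /andP[t0 tT]; rewrite /picard addrC addKr.
exact: sewing_limit_young alpha_gamma_gt1 t0 (F_sewing_integralP hZ (lexx 0) t0 tT).
Qed.

Lemma solution_picard_fixed Y : holder_on T alpha Y -> solves_young_ode T F X y0 Y ->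
  forall x, 0 <= x <= T -> picard Y x = Y x.
Proof.
move=> hY solY x hx; have /andP[x0 xT] := hx.
have := young_integral_unique alpha_gamma_gt1 x0 (fun _ _ => erefl) (solY x hx).
by move/(_ _ (F_sewing_integralP hY (lexx 0) x0 xT)); rewrite /picard => <-; rewrite addrC subrK.
Qed.

Lemma F_bounded_on {Z} : holder_on T alpha Z ->
  exists2 M, 0 <= M & forall s v, 0 <= s <= T -> `|F s Z v| <= M * `|v|.
Proof.
move=> hZ; have T0 : (0 : R) <= 0 <= T by rewrite lexx.
have [c hc] := F_bounded _ _ T0 hZ; have [C HC] := F_holder _ hZ.
exists (`|c| + `|C| * T `^ gamma) => [|s v hs]; first by rewrite addr_ge0 ?mulr_ge0 ?powR_ge0.
rewrite -[F s Z v](subrK (F 0 Z v)) mulrDl addrC.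
apply: le_trans (ler_normD _ _) (lerD _ _).
  by rewrite (le_trans (hc v)) // ler_wpM2r ?ler_norm.
rewrite (le_trans (HC 0 s T0 hs v)) // ler_wpM2r //.
rewrite (le_trans (ler_wpM2r (powR_ge0 _ _) (ler_norm C))) // ler_wpM2l //.
by case/andP: hs => s0 sT; rewrite subr0 ger0_norm // ler_powR2r // ltW.
Qed.

Lemma picard_holder Z : holder_on T alpha Z -> holder_on T alpha (picard Z).
Proof.
move=> hZ; have [c c0 defect] := F_germ_defect hZ.
have [M M0 FM] := F_bounded_on hZ; have [Cx Cx0 hXC] := holder_on_ge0 X_holder.
pose A := sewing_const c (alpha + gamma).
exists (M * Cx + A * T `^ gamma).
suff lt_bound s t : 0 <= s -> s < t -> t <= T ->
    `|picard Z t - picard Z s| <= (M * Cx + A * T `^ gamma) * `|t - s| `^ alpha.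
  move=> s t /andP[s0 sT] /andP[t0 tT].
  case: (ltgtP s t) => [st|ts|<-]; first exact: lt_bound.
    by rewrite distrC [`|t - s|]distrC; exact: lt_bound.
  by rewrite !subrr !normr0 powR0 ?gt_eqF // mulr0.
move=> s0 st tT; have t0 : 0 <= t by exact: le_trans s0 (ltW st).
have -> : picard Z t - picard Z s = sewing_integral (FX Z) s t.
  rewrite /picard (sewing_limit_add alpha_gamma_gt1 s0 (ltW st)
    (F_sewing_integralP hZ (lexx 0) s0 (le_trans (ltW st) tT)) (F_sewing_integralP hZ s0 (ltW st) tT)
    (F_sewing_integralP hZ (lexx 0) t0 tT)).
  by rewrite opprD addrACA subrr add0r addrC addKr.
rewrite -[sewing_integral _ s t](subrK (FX Z s t)) mulrDl addrC.
apply: le_trans (ler_normD _ _) (lerD _ _).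
  have sT : 0 <= s <= T by rewrite s0 (le_trans (ltW st)).
  have tT' : 0 <= t <= T by rewrite t0.
  by rewrite -mulrA (le_trans (FM _ _ sT)) // ler_wpM2l // hXC.
apply: le_trans (sewing_integral_sub_germ c0 alpha_gamma_gt1 defect s0 st tT) _.
rewrite -[X in _ <= X]mulrA; apply: ler_wpM2l; first exact: sewing_const_ge0.
rewrite ger0_norm ?subr_ge0 ?(ltW st) // powRD; last by rewrite gt_eqF //= addr_gt0.
rewrite mulrC; apply: ler_wpM2r; first exact: powR_ge0.
by apply: ler_powR2r; [exact: ltW | rewrite subr_ge0 ltW | lra].
Qed.

Lemma F_local {Z Z' r u} : holder_on T alpha Z -> holder_on T alpha Z' -> 0 <= r ->
  agree_upto T r Z Z' -> 0 <= u <= T -> u <= r + delta -> F u Z = F u Z'.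
Proof.
move=> hZ hZ' r0 agr hu hur; pose m := Num.max (u - delta) 0.
have m0 : 0 <= m by rewrite le_max lexx orbT.
have mr : m <= r by rewrite ge_max lerBlDr hur r0.
rewrite (F_non_anticipating _ _ hu hZ) (F_non_anticipating _ _ hu hZ') -/m.
apply: F_dom => //; try exact: holder_on_stopped.
by move=> x hx; apply: agr; [exact: min_in_range | rewrite ge_min mr].
Qed.

Lemma picard_local Z Z' r : holder_on T alpha Z -> holder_on T alpha Z' -> 0 <= r ->
  agree_upto T r Z Z' -> agree_upto T (r + delta) (picard Z) (picard Z').
Proof.
move=> hZ hZ' r0 agr t ht htr; have /andP[t0 tT] := ht.
have FZZ' u : 0 <= u <= t -> F u Z = F u Z'.
  by case/andP=> u0 ut; apply: (F_local hZ hZ' r0 agr); rewrite ?u0 ?(le_trans ut).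
have := young_integral_unique alpha_gamma_gt1 t0 FZZ' (picard_young hZ ht).
by move/(_ _ (F_sewing_integralP hZ' (lexx 0) t0 tT)) => eq; rewrite -(subrK y0 (picard Z t)) eq addrC.
Qed.

Lemma young_ode_exists : exists2 Y, holder_on T alpha Y & solves_young_ode T F X y0 Y.
Proof.
have [Y hY fixY] := delay_fixed_point delta_gt0 (holder_on_cst T alpha y0) picard_holder
  picard0 picard_local.
by exists Y => // t ht; rewrite -fixY //; exact: picard_young.
Qed.

Lemma young_ode_unique {Y Y'} : holder_on T alpha Y -> holder_on T alpha Y' ->
  solves_young_ode T F X y0 Y -> solves_young_ode T F X y0 Y' ->
  forall t, 0 <= t <= T -> Y t = Y' t.
Proof.
move=> hY hY' solY solY'; apply: (delay_fixed_point_unique delta_gt0 picard0 picard_local) => //.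
- exact: solution_picard_fixed.
- exact: solution_picard_fixed.
Qed.

End YoungODE.

Theorem theorem6p2 (R : realType) (U V : completeNormedModType R)
  (T alpha gamma delta : R)
  (F : R -> (R -> U) -> {linear V -> U}) (X : R -> V)
  (hT : 0 < T)
  (halpha : 0 < alpha <= 1) (hgamma : 0 < gamma <= 1)
  (hag : 1 < alpha + gamma) (hdelta : 0 < delta)
  (* F is a map on [0,T] x C^alpha([0,T],U): it only depends on Z|[0,T] *)
  (hFdom : forall (t : R) (Z Z' : R -> U), 0 <= t <= T ->
     holder_on T alpha Z -> holder_on T alpha Z' ->
     (forall x, 0 <= x <= T -> Z x = Z' x) -> F t Z = F t Z')
  (* each F(t,Z) is a bounded linear map, i.e. lies in L(V,U) *)
  (hFbdd : forall (t : R) (Z : R -> U), 0 <= t <= T -> holder_on T alpha Z ->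
     exists c : R, forall v : V, `|F t Z v| <= c * `|v|)
  (* t |-> F(t,Z) is gamma-Hoelder for the operator norm *)
  (hFhol : forall Z : R -> U, holder_on T alpha Z ->
     exists C : R, forall s t : R, 0 <= s <= T -> 0 <= t <= T ->
       forall v : V, `|F t Z v - F s Z v| <= C * (`|t - s| `^ gamma) * `|v|)
  (hFna : non_anticipating T alpha delta F)
  (hX : holder_on T alpha X) :
  forall y0 : U,
    exists Y : R -> U,
      [/\ holder_on T alpha Y, solves_young_ode T F X y0 Y &
        forall Y' : R -> U, holder_on T alpha Y' -> solves_young_ode T F X y0 Y' ->
          forall t : R, 0 <= t <= T -> Y' t = Y t].
Proof.
move=> y0; have T0 := ltW hT.
have [/andP[alpha0 _] /andP[gamma0 _]] := (halpha, hgamma).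
have [Y hY solY] := young_ode_exists y0 T0 alpha0 gamma0 hag hdelta hFdom hFbdd hFhol hFna hX.
exists Y; split => // Y' hY' solY' t ht.
exact: (young_ode_unique y0 T0 alpha0 gamma0 hag hdelta hFdom hFhol hFna hX hY' hY solY' solY).
Qed.
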